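(* Assume $\|\hat F'(y)-\hat F'(x)\|_F\le L_{\hat F}\|y-x\|$ for all $x,y\in\mathcal F$, and that there is $\mu>0$ with $\sigma_{\min}(\hat F'(x)^* )\ge\sqrt\mu$ for all $x\in\mathcal F$. Let $\{x_k\}$ be generated by Scheme 1 with $\tau_k=\hat f_1(x_k)$. Then for all $k\in\mathbb Z_+$: $$\hat f_1(x_{k+1})\le\varepsilon_k+\begin{cases}\frac{\hat f_1(x_k)}2+\frac{L_{\hat F}}{\mu}\hat f_2(x_k)\le\frac34\hat f_1(x_k),&\text{if }\hat f_1(x_k)\le\frac{\mu}{4L_{\hat F}},\\ \hat f_1(x_k)-\frac{\mu}{16L_{\hat F}},&\text{otherwise.}\end{cases}$$ If moreover $L_k=L_{\hat F}$ is fixed while generating the sequence, then $$\hat f_1(x_{k+1})\le\varepsilon_k+\begin{cases}\frac{\hat f_1(x_k)}2+\frac{L_{\hat F}}{2\mu}\hat f_2(x_k)\le\frac34\hat f_1(x_k),&\text{if }\hat f_1(x_k)\le\frac{\mu}{2L_{\hat F}},\\ \hat f_1(x_k)-\frac{\mu}{8L_{\hat F}},&\text{otherwise.}\end{cases}$$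
   Context: Let $F:\mathbb R^n\to\mathbb R^m$ be smooth, $\hat F=\frac1{\sqrt m}F$ with Jacobian $\hat F'(x)$ and adjoint (transpose) $\hat F'(x)^*$; Euclidean norms, $\|\cdot\|_F$ Frobenius norm. $\hat f_1(x)=\|\hat F(x)\|$, $\hat f_2=\hat f_1^2$, $\phi(x,y)=\|\hat F(x)+\hat F'(x)(y-x)\|$, $\psi_{x,L,\tau}(y)=\frac\tau2+\frac{\phi(x,y)^2}{2\tau}+\frac L2\|y-x\|^2$, $T_{L,\tau}(x)=\arg\min_y\psi_{x,L,\tau}(y)$. $\mathcal F$ closed convex with nonempty interior, $\mathcal L(v)=\{x:\hat f_1(x)\le v\}$, $\mathcal L(\hat f_1(x_0))\subseteq\mathcal F$ and the generated sequence stays in $\mathcal F$. Scheme 1 (input $x_0$, a rule choosing $\varepsilon_k\ge0,\tau_k>0$, $L\in(0,L_{\hat F}]$, $L_0=L$): for $k=0,1,\dots$: choose $\tau_k,\varepsilon_k$; compute $x_{k+1}$ with $\psi_{x_k,L_k,\tau_k}(x_{k+1})-\psi_{x_k,L_k,\tau_k}(T_{L_k,\tau_k}(x_k))\le\varepsilon_k$ and $\hat f_1(x_k)\ge\psi_{x_k,L_k,\tau_k}(x_{k+1})$; if $\hat f_1(x_{k+1})>\psi_{x_k,L_k,\tau_k}(x_{k+1})$, set $L_k:=\min\{2L_k,2L_{\hat F}\}$ and repeat; otherwise $L_{k+1}=\max\{L_k/2,L\}$. *)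

From HB Require Import structures.
From mathcomp Require Import all_boot all_order all_algebra.
From mathcomp Require Import all_classical all_reals all_analysis.
Set Implicit Arguments. Unset Strict Implicit. Unset Printing Implicit Defensive.
Import Order.TTheory GRing.Theory Num.Theory.
Import numFieldNormedType.Exports.
Local Open Scope classical_set_scope.
Local Open Scope ring_scope.

Section Defs.
Variable R : realType.

Definition enorm (k : nat) (v : 'rV[R]_k) : R :=
  Num.sqrt (\sum_(i < k) v ord0 i ^+ 2).

Definition fnorm (p q : nat) (A : 'M[R]_(p, q)) : R :=
  Num.sqrt (\sum_(i < p) \sum_(j < q) A i j ^+ 2).

(* Smallest singular value of the linear map v |-> v *m A from R^p to R^q,
   defined variationally as inf_{||v|| = 1} ||v A|| . *)
Definition sigma_min (p q : nat) (A : 'M[R]_(p, q)) : R :=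
  inf [set enorm (v *m A) | v in [set v : 'rV[R]_p | enorm v = 1]].

Variables (n m : nat) (F : 'rV[R]_n -> 'rV[R]_m).

Definition Fhat (x : 'rV[R]_n) : 'rV[R]_m := (Num.sqrt m%:R)^-1 *: F x.

(* \hat F'(x), as the n x m matrix J with \hat F'(x) h = h *m J. *)
Definition Jhat (x : 'rV[R]_n) : 'M[R]_(n, m) := jacobian Fhat x.

Definition f1 (x : 'rV[R]_n) : R := enorm (Fhat x).
Definition f2 (x : 'rV[R]_n) : R := f1 x ^+ 2.

Definition phi (x y : 'rV[R]_n) : R := enorm (Fhat x + (y - x) *m Jhat x).

Definition psi (x : 'rV[R]_n) (L tau : R) (y : 'rV[R]_n) : R :=
  tau / 2 + phi x y ^+ 2 / (2 * tau) + L / 2 * enorm (y - x) ^+ 2.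

Definition T (L tau : R) (x : 'rV[R]_n) : 'rV[R]_n :=
  get [set y | forall z, psi x L tau y <= psi x L tau z].

Definition sublevel (v : R) : set 'rV[R]_n := [set x | f1 x <= v].

Definition step_ok (x : 'rV[R]_n) (Lk tau eps : R) (y : 'rV[R]_n) : Prop :=
  psi x Lk tau y - psi x Lk tau (T Lk tau x) <= eps /\
  f1 x >= psi x Lk tau y /\
  f1 y <= psi x Lk tau y.

Definition step_rejected (x : 'rV[R]_n) (Lk tau eps : R) (y : 'rV[R]_n) : Prop :=
  psi x Lk tau y - psi x Lk tau (T Lk tau x) <= eps /\
  f1 x >= psi x Lk tau y /\
  f1 y > psi x Lk tau y.

Definition trialL (LF L0 : R) (j : nat) : R := Num.min (2 ^+ j * L0) (2 * LF).

(* (x, eps, tau, Lacc) is generated by Scheme 1 with parameters L, LF: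
   Lstart k is the initial trial value at iteration k (Lstart 0 = L,
   Lstart (k+1) = max (Lacc k / 2) L); jk k is the number of doublings
   performed at iteration k, Lacc k the accepted value. *)
Definition scheme1 (L LF : R) (x : nat -> 'rV[R]_n) (eps tau Lacc : nat -> R)
    : Prop :=
  exists (Lstart : nat -> R) (jk : nat -> nat),
    Lstart 0%N = L /\
    (forall k, Lstart k.+1 = Num.max (Lacc k / 2) L) /\
    (forall k, 0 <= eps k /\ 0 < tau k) /\
    (forall k, Lacc k = trialL LF (Lstart k) (jk k)) /\
    (forall k, step_ok (x k) (Lacc k) (tau k) (eps k) (x k.+1)) /\
    (forall k i, (i < jk k)%N ->
       exists y, step_rejected (x k) (trialL LF (Lstart k) i) (tau k) (eps k) y).

End Defs.

(* Write [f = f1 x_k], [b = Fhat x_k] and [J = Jhat x_k].  Since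
   [sigma_min J^T >= sqrt mu], the Gauss-Newton equation [h J = - b] has a
   solution with [mu |h|^2 <= |b|^2 = f^2].  Along [x_k + t h] the linearised
   residual is [(1 - t) b], so with [tau_k = f] the model satisfies
   [psi (x_k + t h) <= f/2 + (1 - t)^2 f/2 + (L_k / (2 mu)) t^2 f^2].
   The acceptance test and the inexactness bound give
   [f1 x_(k+1) <= psi x_(k+1) <= eps_k + psi (T x_k) <= eps_k + psi (x_k + t h)].
   With [K >= L_k / 2] ([K = LF] in general, since [L_k <= 2 LF]; [K = LF / 2]
   when [L_k = LF]) take [t = 1] if [f <= mu / (4 K)] and [t = mu / (4 K f)]
   otherwise.
   The Lipschitz bound on the Jacobian and the assumptions on [Fset] only serve
   to make the backtracking of Scheme 1 terminate; here acceptance is part of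
   [scheme1] and the cap [L_k <= 2 LF] is built into [trialL]. *)

From HB Require Import structures.
From mathcomp Require Import all_boot all_order all_algebra.
From mathcomp Require Import all_classical all_reals all_analysis.
From mathcomp Require Import ring lra.
Set Implicit Arguments. Unset Strict Implicit. Unset Printing Implicit Defensive.
Import Order.TTheory GRing.Theory Num.Theory.
Import numFieldNormedType.Exports.
Local Open Scope classical_set_scope.
Local Open Scope ring_scope.

Section RowDot.
Variable R : realFieldType.

Definition dot (k : nat) (u v : 'rV[R]_k) : R := (u *m v^T) ord0 ord0.

Lemma dotE k (u v : 'rV[R]_k) : dot u v = \sum_(i < k) u ord0 i * v ord0 i.
Proof. by rewrite /dot !mxE; apply: eq_bigr => i _; rewrite mxE. Qed.

Lemma dotC k (u v : 'rV[R]_k) : dot u v = dot v u.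
Proof. by rewrite !dotE; apply: eq_bigr => i _; rewrite mulrC. Qed.

Lemma dotDl k (u w v : 'rV[R]_k) : dot (u + w) v = dot u v + dot w v.
Proof. by rewrite !dotE -big_split; apply: eq_bigr => i _; rewrite mxE mulrDl. Qed.

Lemma dotZl k a (u v : 'rV[R]_k) : dot (a *: u) v = a * dot u v.
Proof. by rewrite !dotE mulr_sumr; apply: eq_bigr => i _; rewrite mxE mulrA. Qed.

Lemma dotNl k (u v : 'rV[R]_k) : dot (- u) v = - dot u v.
Proof. by rewrite -scaleN1r dotZl mulN1r. Qed.

Lemma dotDr k (u w v : 'rV[R]_k) : dot v (u + w) = dot v u + dot v w.
Proof. by rewrite dotC dotDl !(dotC v). Qed.

Lemma dotZr k a (u v : 'rV[R]_k) : dot v (a *: u) = a * dot v u.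
Proof. by rewrite dotC dotZl dotC. Qed.

Lemma dotNr k (u v : 'rV[R]_k) : dot v (- u) = - dot v u.
Proof. by rewrite dotC dotNl dotC. Qed.

Lemma dot0l k (v : 'rV[R]_k) : dot 0 v = 0.
Proof. by rewrite /dot mul0mx mxE. Qed.

Lemma dot_mulmx p q (u : 'rV[R]_p) (A : 'M[R]_(p, q)) (v : 'rV[R]_q) :
  dot (u *m A) v = dot u (v *m A^T).
Proof. by rewrite /dot trmx_mul trmxK mulmxA. Qed.

Lemma dot_ge0 k (v : 'rV[R]_k) : 0 <= dot v v.
Proof. by rewrite dotE; apply: sumr_ge0 => i _; rewrite -expr2 sqr_ge0. Qed.

Lemma dot_eq0 k (v : 'rV[R]_k) : (dot v v == 0) = (v == 0).
Proof.
apply/idP/idP => [|/eqP->]; last by rewrite dot0l.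
rewrite dotE psumr_eq0 => [/allP v0|i _]; last by rewrite -expr2 sqr_ge0.
apply/eqP/rowP => i; rewrite mxE; apply/eqP.
by rewrite -sqrf_eq0 expr2; apply: v0; rewrite mem_index_enum.
Qed.

Lemma coercive_unitmx k (M : 'M[R]_k) c : 0 < c ->
  (forall v, c * dot v v <= dot (v *m M) v) -> M \in unitmx.
Proof.
move=> c0 cM; rewrite -row_free_unit -kermx_eq0; apply/eqP/row_matrixP => i.
rewrite row0; set r := row i _; apply/eqP; rewrite -dot_eq0.
have /eqP rM0 : r *m M == 0 by rewrite -sub_kermx row_sub.
have := cM r; rewrite rM0 dot0l (pmulr_rle0 _ c0) => r_le0.
by rewrite eq_le r_le0 dot_ge0.
Qed.

(* The witness is the least-norm solution [w J^T], where [w (J^T J) = b]. *)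
Lemma bounded_preimage n m (J : 'M[R]_(n, m)) mu (b : 'rV[R]_m) : 0 < mu ->
  (forall v, mu * dot v v <= dot (v *m J^T) (v *m J^T)) ->
  exists h, h *m J = b /\ mu * dot h h <= dot b b.
Proof.
move=> mu0 coerJ; set G := J^T *m J.
have /mulVmx GV : G \in unitmx.
  by apply: (coercive_unitmx mu0) => v; rewrite mulmxA dot_mulmx; exact: coerJ.
set w := b *m invmx G.
have wG : w *m G = b by rewrite -mulmxA GV mulmx1.
exists (w *m J^T); split; first by rewrite -mulmxA.
have hh : dot (w *m J^T) (w *m J^T) = dot b w.
  by rewrite -(dot_mulmx (w *m J^T) J w) -mulmxA wG.
have ww : mu * dot w w <= dot b w by rewrite -hh; apply: coerJ.
have := dot_ge0 (mu *: w - b).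
rewrite !(dotDl, dotDr, dotZl, dotZr, dotNl, dotNr) (dotC w b) hh; nra.
Qed.

Lemma quadratic_has_min k (M : 'M[R]_k) (g : 'rV[R]_k) c : 0 < c -> M^T = M ->
  (forall v, c * dot v v <= dot (v *m M) v) ->
  exists hs, forall h,
    dot (hs *m M) hs + 2 * dot hs g <= dot (h *m M) h + 2 * dot h g.
Proof.
move=> c0 MT coerM; have /mulVmx MV := coercive_unitmx c0 coerM.
set hs := - (g *m invmx M).
have hsM : hs *m M = - g by rewrite mulNmx -mulmxA MV mulmx1.
exists hs => h; clearbody hs.
have [d ->] : exists d, h = hs + d by exists (h - hs); rewrite addrC subrK.
have dM : dot (d *m M) hs = - dot d g by rewrite dot_mulmx MT hsM dotNr.
rewrite mulmxDl !(dotDl, dotDr) dM hsM !dotNl (dotC g d) (dotC g hs).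
have := coerM d; have := dot_ge0 d; nra.
Qed.

Lemma lsq_has_min n m (J : 'M[R]_(n, m)) (b : 'rV[R]_m) c L : 0 <= c -> 0 < L ->
  exists hs, forall h,
    c * dot (b + hs *m J) (b + hs *m J) + L * dot hs hs <=
    c * dot (b + h *m J) (b + h *m J) + L * dot h h.
Proof.
move=> c0 L0; set M := c *: (J *m J^T) + L%:M.
have MT : M^T = M by rewrite linearD /= linearZ /= trmx_mul trmxK tr_scalar_mx.
have MvE v : dot (v *m M) v = c * dot (v *m J) (v *m J) + L * dot v v.
  by rewrite mulmxDr mul_mx_scalar -scalemxAr dotDl !dotZl mulmxA dot_mulmx trmxK.
have coerM v : L * dot v v <= dot (v *m M) v.
  by rewrite MvE lerDr mulr_ge0 ?dot_ge0.
have [hs hs_min] := quadratic_has_min (c *: (b *m J^T)) L0 MT coerM.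
have expand h : c * dot (b + h *m J) (b + h *m J) + L * dot h h =
    c * dot b b + (dot (h *m M) h + 2 * dot h (c *: (b *m J^T))).
  by rewrite MvE dotZr -dot_mulmx !(dotDl, dotDr) (dotC b (h *m J)); ring.
by exists hs => h; rewrite !expand lerD2l.
Qed.

End RowDot.

Section ModelBounds.
Variable R : realFieldType.

Lemma model_small_le (f K mu : R) : 0 < f -> 0 < K -> 0 < mu ->
  f <= mu / (4 * K) -> f / 2 + K / mu * f ^+ 2 <= 3 / 4 * f.
Proof.
move=> f0 K0 mu0 f_le; set r := f * (4 * K) / mu.
have r_le1 : r <= 1 by rewrite ler_pdivrMr // mul1r -ler_pdivlMr ?mulr_gt0.
have r_ge0 : 0 <= r by rewrite divr_ge0 // ltW // !mulr_gt0.
have -> : K / mu * f ^+ 2 = r * f / 4 by rewrite /r; field; rewrite gt_eqF.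
nra.
Qed.

Lemma model_large_le (f K mu : R) : 0 < f -> 0 < K -> 0 < mu ->
  mu / (4 * K) < f ->
  exists t, f / 2 + (1 - t) ^+ 2 * f / 2 + K / mu * (t * f) ^+ 2 <= f - mu / (16 * K).
Proof.
move=> f0 K0 mu0 f_gt; exists (mu / (4 * K * f)); set t := mu / _.
have tf : t * f = mu / (4 * K) by rewrite /t; field; rewrite !gt_eqF.
have -> : K / mu * (t * f) ^+ 2 = t * f / 4 by rewrite tf; field; rewrite !gt_eqF.
have -> : mu / (16 * K) = t * f / 4 by rewrite tf; field; rewrite gt_eqF.
have t_ge0 : 0 <= t by rewrite divr_ge0 // ltW // !mulr_gt0.
have t_le1 : t <= 1 by rewrite -(ler_pM2r f0) mul1r tf ltW.
nra.
Qed.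

Lemma model_bound_cases (y e f K mu : R) : 0 < f -> 0 < K -> 0 < mu ->
  (forall t, y <= e + (f / 2 + (1 - t) ^+ 2 * f / 2 + K / mu * (t * f) ^+ 2)) ->
  (f <= mu / (4 * K) ->
     y <= e + (f / 2 + K / mu * f ^+ 2) /\ f / 2 + K / mu * f ^+ 2 <= 3 / 4 * f) /\
  (~ f <= mu / (4 * K) -> y <= e + (f - mu / (16 * K))).
Proof.
move=> f0 K0 mu0 y_le; split=> [f_le | /negP]; last first.
  rewrite -ltNge => /(model_large_le f0 K0 mu0) [t model_le].
  by apply: le_trans (y_le t) _; rewrite lerD2l.
split; last exact: model_small_le.
by have := y_le 1; rewrite subrr mul1r expr0n /= !mul0r addr0.
Qed.

End ModelBounds.

Section EuclideanNorm.
Variable R : realType.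

Lemma enormE k (v : 'rV[R]_k) : enorm v = Num.sqrt (dot v v).
Proof. by rewrite dotE; congr Num.sqrt; apply: eq_bigr => i _; rewrite expr2. Qed.

Lemma enorm_sq k (v : 'rV[R]_k) : enorm v ^+ 2 = dot v v.
Proof. by rewrite enormE sqr_sqrtr // dot_ge0. Qed.

Lemma enorm_ge0 k (v : 'rV[R]_k) : 0 <= enorm v.
Proof. exact: sqrtr_ge0. Qed.

Lemma enorm_gt0 k (v : 'rV[R]_k) : (0 < enorm v) = (v != 0).
Proof. by rewrite enormE sqrtr_gt0 lt_def dot_ge0 dot_eq0 andbT. Qed.

Lemma enormZ k a (v : 'rV[R]_k) : enorm (a *: v) = `|a| * enorm v.
Proof.
by rewrite !enormE dotZl dotZr mulrA -expr2 sqrtrM ?sqr_ge0 // sqrtr_sqr.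
Qed.

Lemma sigma_min_le_enorm p q (A : 'M[R]_(p, q)) v :
  enorm v = 1 -> sigma_min A <= enorm (v *m A).
Proof.
move=> v1; apply: ge_inf; last by exists v.
by exists 0 => _ [w _ <-]; exact: enorm_ge0.
Qed.

Lemma sigma_min_mulmx p q (A : 'M[R]_(p, q)) v :
  sigma_min A * enorm v <= enorm (v *m A).
Proof.
have [->|v0] := eqVneq v 0; first by rewrite mul0mx !enormE dot0l sqrtr0 mulr0.
have s0 : 0 < enorm v by rewrite enorm_gt0.
have := @sigma_min_le_enorm _ _ A ((enorm v)^-1 *: v).
rewrite -scalemxAl !enormZ gtr0_norm ?invr_gt0 // mulVf ?gt_eqF // => /(_ erefl).
by rewrite -ler_pdivlMr // mulrC.
Qed.

Lemma coercive_of_sigma_min p q (A : 'M[R]_(p, q)) mu : 0 <= mu ->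
  Num.sqrt mu <= sigma_min A -> forall v, mu * dot v v <= dot (v *m A) (v *m A).
Proof.
move=> mu0 muA v; rewrite -!enorm_sq -[mu]sqr_sqrtr // -exprMn.
have le_norm : Num.sqrt mu * enorm v <= enorm (v *m A).
  exact: le_trans (ler_wpM2r (enorm_ge0 v) muA) (sigma_min_mulmx A v).
by rewrite ler_pXn2r ?nnegrE ?mulr_ge0 ?sqrtr_ge0 ?enorm_ge0.
Qed.

End EuclideanNorm.

Section ModelMinimizer.
Variables (R : realType) (n m : nat) (F : 'rV[R]_n -> 'rV[R]_m).

Lemma psi_addE x L tau h : psi F x L tau (x + h) =
  tau / 2 + dot (Fhat F x + h *m Jhat F x) (Fhat F x + h *m Jhat F x) / (2 * tau)
  + L / 2 * dot h h.
Proof. by rewrite /psi /phi (addrC x h) addrK !enorm_sq. Qed.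

Lemma psi_has_min x L tau : 0 < tau -> 0 < L ->
  exists y, forall z, psi F x L tau y <= psi F x L tau z.
Proof.
move=> tau0 L0.
have c_ge0 : 0 <= (2 * tau)^-1 by rewrite invr_ge0 mulr_ge0 // ltW.
have L2_gt0 : 0 < L / 2 by rewrite divr_gt0.
have [h h_min] := lsq_has_min (Jhat F x) (Fhat F x) c_ge0 L2_gt0.
exists (x + h) => z; have -> : z = x + (z - x) by rewrite addrC subrK.
by rewrite !psi_addE -!addrA lerD2l !(mulrC _ (2 * tau)^-1).
Qed.

Lemma psi_T_le x L tau z : 0 < tau -> 0 < L ->
  psi F x L tau (T F L tau x) <= psi F x L tau z.
Proof. by move=> tau0 L0; apply: (getPex (psi_has_min x tau0 L0)). Qed.

End ModelMinimizer.

Section GaussNewtonStep.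
Variables (R : realType) (n m : nat) (F : 'rV[R]_n -> 'rV[R]_m).
Variables (x y : 'rV[R]_n) (Lk eps mu : R).
Hypotheses (Lk_gt0 : 0 < Lk) (mu_gt0 : 0 < mu) (f1x_gt0 : 0 < f1 F x).
Hypothesis sigma_min_Jx : Num.sqrt mu <= sigma_min (Jhat F x)^T.
Hypothesis accepted : step_ok F x Lk (f1 F x) eps y.

Lemma f1_step_le K t : Lk / 2 <= K ->
  f1 F y <= eps + (f1 F x / 2 + (1 - t) ^+ 2 * f1 F x / 2 + K / mu * (t * f1 F x) ^+ 2).
Proof.
move=> LK; set f := f1 F x; set b := Fhat F x; set J := Jhat F x.
have coerJ := coercive_of_sigma_min (ltW mu_gt0) sigma_min_Jx.
have [h [hJ h_le]] := bounded_preimage (- b) mu_gt0 coerJ.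
have bb : dot b b = f ^+ 2 by rewrite -enorm_sq.
rewrite dotNl dotNr opprK bb in h_le.
have psi_line : psi F x Lk f (x + t *: h) =
    f / 2 + (1 - t) ^+ 2 * f / 2 + Lk / 2 * (t ^+ 2 * dot h h).
  rewrite psi_addE -scalemxAl hJ -/b -/J.
  have -> : b + t *: - b = (1 - t) *: b by rewrite scalerN scalerBl scale1r.
  by rewrite dotZl dotZr bb !(dotZl, dotZr); field; rewrite gt_eqF.
have lin_le : Lk / 2 * (t ^+ 2 * dot h h) <= K / mu * (t * f) ^+ 2.
  have -> : K / mu * (t * f) ^+ 2 = K * (t ^+ 2 * (f ^+ 2 / mu)) by field; rewrite gt_eqF.
  apply: ler_pM => //; first by rewrite divr_ge0 // ltW.
    by rewrite mulr_ge0 ?sqr_ge0 ?dot_ge0.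
  by rewrite ler_wpM2l ?sqr_ge0 // ler_pdivlMr // mulrC.
have [inexact [_ acceptance]] := accepted.
have := psi_T_le F x (x + t *: h) f1x_gt0 Lk_gt0; rewrite psi_line => T_le.
apply: le_trans acceptance _; lra.
Qed.

End GaussNewtonStep.

Section Scheme1.
Variables (R : realType) (n m : nat) (F : 'rV[R]_n -> 'rV[R]_m) (L LF : R).
Variables (x : nat -> 'rV[R]_n) (eps tau Lacc : nat -> R).
Hypothesis scheme : scheme1 F L LF x eps tau Lacc.

Lemma scheme1_Lacc_gt0 k : 0 < L -> 0 < LF -> 0 < Lacc k.
Proof.
move=> L0 LF0; have [Ls [jk [Ls0 [LsS [_ [-> _]]]]]] := scheme.
have LsL : L <= Ls k by case: k => [|k]; rewrite ?Ls0 ?LsS ?le_max lexx ?orbT.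
by rewrite /trialL lt_min !mulr_gt0 ?exprn_gt0 // (lt_le_trans L0 LsL).
Qed.

Lemma scheme1_Lacc_le k : Lacc k <= 2 * LF.
Proof.
by have [Ls [jk [_ [_ [_ [-> _]]]]]] := scheme; rewrite /trialL ge_min lexx orbT.
Qed.

End Scheme1.

Theorem theorem3 (R : realType) (n m : nat) (F : 'rV[R]_n -> 'rV[R]_m)
  (Fset : set 'rV[R]_n) (LF L mu : R)
  (x : nat -> 'rV[R]_n) (eps tau Lacc : nat -> R) :
  (forall z, differentiable F z) ->
  closed Fset -> convex_set Fset -> (Fset°) !=set0 ->
  sublevel F (f1 F (x 0%N)) `<=` Fset ->
  (forall k, Fset (x k)) ->
  0 < LF -> 0 < L -> L <= LF ->
  (forall y z, Fset y -> Fset z ->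
     fnorm (Jhat F z - Jhat F y) <= LF * enorm (z - y)) ->
  0 < mu ->
  (forall z, Fset z -> Num.sqrt mu <= sigma_min (Jhat F z)^T) ->
  scheme1 F L LF x eps tau Lacc ->
  (forall k, tau k = f1 F (x k)) ->
  (forall k,
     (f1 F (x k) <= mu / (4 * LF) ->
        f1 F (x k.+1) <= eps k + (f1 F (x k) / 2 + LF / mu * f2 F (x k)) /\
        f1 F (x k) / 2 + LF / mu * f2 F (x k) <= 3 / 4 * f1 F (x k)) /\
     (~ (f1 F (x k) <= mu / (4 * LF)) ->
        f1 F (x k.+1) <= eps k + (f1 F (x k) - mu / (16 * LF)))) /\
  ((forall k, Lacc k = LF) ->
   forall k,
     (f1 F (x k) <= mu / (2 * LF) ->
        f1 F (x k.+1) <= eps k + (f1 F (x k) / 2 + LF / (2 * mu) * f2 F (x k)) /\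
        f1 F (x k) / 2 + LF / (2 * mu) * f2 F (x k) <= 3 / 4 * f1 F (x k)) /\
     (~ (f1 F (x k) <= mu / (2 * LF)) ->
        f1 F (x k.+1) <= eps k + (f1 F (x k) - mu / (8 * LF)))).
Proof.
move=> _ _ _ _ _ inF LF0 L0 _ _ mu0 sigma_minJ scheme tauE.
have [_ [_ [_ [_ [eps_tau [_ [accepted _]]]]]]] := scheme.
have f1_gt0 k : 0 < f1 F (x k) by rewrite -tauE; case: (eps_tau k).
have accepted_f1 k : step_ok F (x k) (Lacc k) (f1 F (x k)) (eps k) (x k.+1).
  by rewrite -tauE.
have step k K t := f1_step_le (scheme1_Lacc_gt0 scheme k L0 LF0) mu0 (f1_gt0 k)
  (sigma_minJ _ (inF k)) (accepted_f1 k) (K := K) t.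
split=> [k | Lacc_LF k].
  apply: model_bound_cases => // t; apply: step.
  by rewrite ler_pdivrMr // mulrC (scheme1_Lacc_le scheme).
have LF2_gt0 : 0 < LF / 2 by rewrite divr_gt0.
have LaccK : Lacc k / 2 <= LF / 2 by rewrite Lacc_LF.
move: (model_bound_cases (f1_gt0 k) LF2_gt0 mu0 (fun t => step k _ t LaccK)).
have -> : mu / (4 * (LF / 2)) = mu / (2 * LF) by field; rewrite gt_eqF.
have -> : LF / 2 / mu = LF / (2 * mu) by field; rewrite gt_eqF.
by have -> : mu / (16 * (LF / 2)) = mu / (8 * LF) by field; rewrite gt_eqF.
Qed.
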